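(* Let $z\in\mathbb{R}_{\ge0}^s$ with $\sum_j z_j>0$, $\eta>0$, and let $\tilde z_k=\max\big(z_k-\eta\frac{\partial\mathcal{H}}{\partial z_k}(z),0\big)$ (with $\tilde z_k=0$ when $z_k=0$), and suppose $\sum_j\tilde z_j>0$. Let $p_i=z_i/\sum_j z_j$ and $\tilde p_i=\tilde z_i/\sum_j\tilde z_j$. Then for all $k,k'$ with $z_k<z_{k'}$ we have $\tilde p_k\le\tilde p_{k'}$, i.e. the order of state probabilities is preserved.
   Context: $\mathcal{H}(z)=-\sum_i \frac{z_i}{\sum_j z_j}\log\frac{z_i}{\sum_j z_j}$ with $0\log0=0$; for $z_k>0$ the gradient is the partial derivative, and for $z_k=0$ it is regarded as $+\infty$. *)

From mathcomp Require Import all_boot all_order all_algebra.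
From mathcomp Require Import all_classical all_reals all_analysis.
Set Implicit Arguments. Unset Strict Implicit. Unset Printing Implicit Defensive.
Import Order.TTheory GRing.Theory Num.Theory.
Local Open Scope ring_scope.

Definition xlnx {R : realType} (x : R) : R := if x == 0 then 0 else x * ln x.

Definition mass {R : realType} {s : nat} (z : 'I_s -> R) : R := \sum_(j < s) z j.

Definition prob {R : realType} {s : nat} (z : 'I_s -> R) (i : 'I_s) : R :=
  z i / mass z.

Definition entropy {R : realType} {s : nat} (z : 'I_s -> R) : R :=
  - \sum_(i < s) xlnx (prob z i).

Definition shift {R : realType} {s : nat} (z : 'I_s -> R) (k : 'I_s) (t : R)
  : 'I_s -> R := fun i => z i + (if i == k then t else 0).

(* partial derivative dH/dz_k at z (used when z_k > 0) *)
Definition dH {R : realType} {s : nat} (z : 'I_s -> R) (k : 'I_s) : R :=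
  derive1 (fun t : R => entropy (shift z k t)) 0.

(* one projected gradient step: ztilde_k = max(z_k - eta dH/dz_k, 0),
   and ztilde_k = 0 when z_k = 0 (gradient regarded as +oo) *)
Definition zstep {R : realType} {s : nat} (eta : R) (z : 'I_s -> R)
  (k : 'I_s) : R :=
  if z k == 0 then 0 else Num.max (z k - eta * dH z k) 0.

From Pilot Require Import Defs.
From mathcomp Require Import all_boot all_order all_algebra.
From mathcomp Require Import all_classical all_reals all_analysis.
From mathcomp Require Import ring lra.
Import Order.TTheory GRing.Theory Num.Theory.
Local Open Scope ring_scope.
Set Implicit Arguments.
Unset Strict Implicit.
Unset Printing Implicit Defensive.

(* Writing S for the mass of z, the entropy is ln S - (sum_i z_i ln z_i) / S,
   so at a coordinate z_k > 0 its partial derivative is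
   (sum_i z_i ln z_i) / S^2 - (ln z_k) / S, which decreases with z_k.  Hence
   z_k - eta dH/dz_k is increasing in z_k, and clipping at 0 and dividing by
   the common mass of the new point keep the order; a coordinate z_k = 0 is
   sent to 0, the least possible value. *)

Section ShiftDerivatives.
Variable R : realType.

Lemma is_derive_shift (c : R) : is_derive (0 : R) 1 (fun t : R => c + t) 1.
Proof.
by have := is_deriveD (is_derive_cst c (0 : R) 1) (is_derive_id (0 : R) 1); rewrite add0r.
Qed.

Lemma is_derive_ln_shift (c : R) : 0 < c ->
  is_derive (0 : R) 1 (fun t : R => ln (c + t)) c^-1.
Proof.
move=> c_gt0.
have ln_c : is_derive (c + 0) 1 (@ln R) c^-1 by rewrite addr0; exact: is_derive1_ln.
by have := is_derive1_comp ln_c (is_derive_shift c); rewrite mulr1.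
Qed.

Lemma is_derive_xlnx_shift (a : R) : 0 < a ->
  is_derive (0 : R) 1 (fun t : R => (a + t) * ln (a + t)) (ln a + 1).
Proof.
move=> a_gt0.
have := is_deriveM (is_derive_shift a) (is_derive_ln_shift a_gt0).
move=> h; apply: (is_derive_eq h).
by rewrite addr0 /GRing.scale /= mulfV ?gt_eqF // mulr1 addrC.
Qed.

Lemma is_derive_entropy_profile (S a C : R) : 0 < S -> 0 < a ->
  is_derive (0 : R) 1
    (fun t : R => ln (S + t) - (C + (a + t) * ln (a + t)) / (S + t))
    ((C + a * ln a) / S ^+ 2 - ln a / S).
Proof.
move=> S_gt0 a_gt0.
have S_neq0 : S + 0 != 0 by rewrite addr0 gt_eqF.
have := is_deriveB (is_derive_ln_shift S_gt0) (is_deriveM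
  (is_deriveD (is_derive_cst C (0 : R) 1) (is_derive_xlnx_shift a_gt0))
  (is_deriveV S_neq0 (is_derive_shift S))).
move=> h; apply: (is_derive_eq h).
rewrite /GRing.scale /= !addr0 add0r !mulr1 !fctE /= addr0.
by field; rewrite gt_eqF.
Qed.

End ShiftDerivatives.

Lemma xlnx_gt0 (R : realType) (x : R) : 0 < x -> xlnx x = x * ln x.
Proof. by move=> x_gt0; rewrite /xlnx gt_eqF. Qed.

Lemma xlnx_div (R : realType) (x c : R) : 0 <= x -> 0 < c ->
  xlnx (x / c) = xlnx x / c - x / c * ln c.
Proof.
move=> x_ge0 c_gt0; rewrite /xlnx.
have [->|x_neq0] := eqVneq x 0; first by rewrite !mul0r eqxx subr0.
have x_gt0 : 0 < x by rewrite lt_def x_neq0.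
rewrite mulf_eq0 invr_eq0 (negbTE x_neq0) (gt_eqF c_gt0) /= ln_div ?posrE //.
by field; rewrite gt_eqF.
Qed.

Section Entropy.
Variables (R : realType) (s : nat).
Implicit Types (z : 'I_s -> R) (k : 'I_s).

Lemma le_mass z k : (forall j, 0 <= z j) -> z k <= mass z.
Proof. by move=> z_ge0; rewrite /mass (bigD1 k) //= lerDl sumr_ge0. Qed.

Lemma le_prob z k k' : 0 <= mass z -> z k <= z k' -> prob z k <= prob z k'.
Proof. by move=> mass_ge0 le_zk; rewrite ler_wpM2r ?invr_ge0. Qed.

Lemma entropyE z : (forall j, 0 <= z j) -> 0 < mass z ->
  entropy z = ln (mass z) - (\sum_(i < s) xlnx (z i)) / mass z.
Proof.
move=> z_ge0 mass_gt0.
rewrite /entropy /prob (eq_bigr _ (fun i _ => xlnx_div (z_ge0 i) mass_gt0)).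
rewrite sumrB -!mulr_suml -/(mass z) divff ?gt_eqF // mul1r; lra.
Qed.

Lemma mass_shift z k t : mass (Defs.shift z k t) = mass z + t.
Proof.
rewrite /mass /Defs.shift big_split /=; congr (_ + _).
by rewrite (bigD1 k) //= eqxx big1 ?addr0 // => i /negbTE ->.
Qed.

Lemma sum_xlnx_shift z k t :
  \sum_(i < s) xlnx (Defs.shift z k t i) =
  \sum_(i < s) xlnx (z i) - xlnx (z k) + xlnx (z k + t).
Proof.
rewrite /Defs.shift (bigD1 k) //= [in RHS](bigD1 k) //= eqxx.
rewrite (eq_bigr (fun i => xlnx (z i))); last by move=> i /negbTE ->; rewrite addr0.
ring.
Qed.

Lemma entropy_shift_near z k : (forall j, 0 <= z j) -> 0 < z k ->
  \forall t \near (0 : R^o), entropy (Defs.shift z k t) =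
    ln (mass z + t) - (\sum_(i < s) xlnx (z i) - xlnx (z k)
                       + (z k + t) * ln (z k + t)) / (mass z + t).
Proof.
move=> z_ge0 zk_gt0; near=> t.
have zkt_gt0 : 0 < z k + t.
  have : `|t| < z k by near: t; exact: (@nbhs0_lt R R^o).
  by rewrite ltr_norml => /andP[]; lra.
have shift_ge0 i : 0 <= Defs.shift z k t i.
  by rewrite /Defs.shift; case: eqP => [->|_]; [exact: ltW | rewrite addr0].
have mass_gt0 : 0 < mass (Defs.shift z k t).
  by rewrite mass_shift; have := le_mass k z_ge0; lra.
by rewrite entropyE // mass_shift sum_xlnx_shift (xlnx_gt0 zkt_gt0).
Unshelve. all: by end_near.
Qed.

Lemma dHE z k : (forall j, 0 <= z j) -> 0 < z k ->
  dH z k = (\sum_(i < s) xlnx (z i)) / mass z ^+ 2 - ln (z k) / mass z.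
Proof.
move=> z_ge0 zk_gt0.
have mass_gt0 : 0 < mass z by apply: lt_le_trans (le_mass k z_ge0).
have := is_derive_entropy_profile (\sum_(i < s) xlnx (z i) - xlnx (z k))
  mass_gt0 zk_gt0.
rewrite -(xlnx_gt0 zk_gt0) subrK => profile_derive.
have near_eq := entropy_shift_near z_ge0 zk_gt0.
rewrite /dH derive1E.
apply: derive_val; apply: near_eq_is_derive profile_derive.
by apply: filterS near_eq => t /esym.
Qed.

Lemma dH_le z k k' : (forall j, 0 <= z j) -> 0 < z k -> z k <= z k' ->
  dH z k' <= dH z k.
Proof.
move=> z_ge0 zk_gt0 le_zk.
have zk'_gt0 : 0 < z k' by apply: lt_le_trans le_zk.
have mass_gt0 : 0 < mass z by apply: lt_le_trans (le_mass k z_ge0).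
rewrite !dHE // lerD2l lerN2.
by rewrite ler_wpM2r ?invr_ge0 ?(ltW mass_gt0) // ler_ln ?posrE.
Qed.

Lemma zstep_le (eta : R) z k k' : (forall j, 0 <= z j) -> 0 <= eta ->
  z k < z k' -> zstep eta z k <= zstep eta z k'.
Proof.
move=> z_ge0 eta_ge0 lt_zk.
have zk'_gt0 : 0 < z k' by apply: le_lt_trans lt_zk.
rewrite /zstep (gt_eqF zk'_gt0).
have [_|zk_neq0] := eqVneq (z k) 0; first by rewrite le_max lexx orbT.
have zk_gt0 : 0 < z k by rewrite lt_def zk_neq0 z_ge0.
apply: le_max2 => //; apply: lerB (ltW lt_zk) _.
by apply: ler_wpM2l => //; exact: dH_le z_ge0 zk_gt0 (ltW lt_zk).
Qed.

End Entropy.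

Theorem corollary8 (R : realType) (s : nat) (z : 'I_s -> R) (eta : R)
  (hz : forall j, 0 <= z j) (hS : 0 < mass z) (heta : 0 < eta)
  (hS' : 0 < mass (zstep eta z)) :
  forall k k' : 'I_s, z k < z k' ->
    prob (zstep eta z) k <= prob (zstep eta z) k'.
Proof.
move=> k k' lt_zk.
by apply: le_prob; [exact: ltW | exact: zstep_le (ltW heta) lt_zk].
Qed.
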